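(* Let $\eta,\lambda\in\mathbb{C}$ and let $v\in\mathcal{F}_{\eta,\lambda}$ be a singular vector that is not a multiple of $|\eta\rangle$. Define $\kappa(v)=\max\{k\in\mathbb{Z}:\alpha_kv\neq0\}$. Then: 1. $\kappa(v)>0$. 2. $\alpha_{\kappa(v)}v$ is again a (nonzero) singular vector. 3. If $v$ is homogeneous of grade $d$ and $\mathcal{F}_{\eta,\lambda}$ contains no proper singular vector of grade strictly between $0$ and $d$, then the coefficient of $\alpha_{-d}|\eta\rangle$ in the expansion of $v$ in the monomial basis is nonzero.
   Context: The Heisenberg modes satisfy $[\alpha_m,\alpha_n]=m\delta_{m,-n}$. $\mathcal{F}_{\eta,\lambda}$ is the Fock space generated by the vacuum $|\eta\rangle$ with $\alpha_n|\eta\rangle=0$ for $n>0$ and $\alpha_0|\eta\rangle=\eta|\eta\rangle$. It is graded by the monomial basis $\alpha_{-\sigma_1}\cdots\alpha_{-\sigma_j}|\eta\rangle$, which has grade $\sum_i\sigma_i$. $\mathcal{F}_{\eta,\lambda}$ is a Virasoro module via $$L_n=\tfrac12\sum_k:\alpha_k\alpha_{n-k}:-\lambda(n+1)\alpha_n,$$ where normal ordering places positive-index modes to the right. A singular vector is a nonzero $L_0$-eigenvector $v$ with $L_nv=0$ for all $n>0$. It is proper if it is not a multiple of $|\eta\rangle$. *)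

From HB Require Import structures.
From mathcomp Require Import all_boot all_order all_algebra.
Set Implicit Arguments. Unset Strict Implicit. Unset Printing Implicit Defensive.
Import Order.TTheory GRing.Theory Num.Theory.
Local Open Scope ring_scope.

(* Concrete model of the Heisenberg Fock space F_{eta,lambda}:
   the monomial basis vector  alpha_{-s1} ... alpha_{-sj} |eta>  is indexed by
   the partition [:: s1; ...; sj] written as a non-increasing list of positive
   naturals; a vector is its coefficient function on such lists. *)

Definition is_part (m : seq nat) : bool :=
  sorted geq m && all (fun i => (0 < i)%N) m.

Definition grade (m : seq nat) : nat := sumn m.

Definition fvec (F : Type) := seq nat -> F.

Section Fock.
Variable F : numClosedFieldType.

Definition in_fock (v : fvec F) : Prop :=
  (forall m, v m != 0 -> is_part m) /\
  exists N : nat, forall m, (N < grade m)%N -> v m = 0.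

Definition nonzero (v : fvec F) : Prop := exists m, v m != 0.

Definition vac : fvec F := fun m => if m == [::] then 1 else 0.

Definition crea (n : nat) (v : fvec F) : fvec F :=
  fun m => if is_part m && (n \in m) then v (rem n m) else 0.

(* alpha_n (n > 0): n * d/dx_n, i.e. coefficient at m is n (mult_n m + 1) v(m+n) *)
Definition ann (n : nat) (v : fvec F) : fvec F :=
  fun m => if is_part m then (n * (count_mem n m).+1)%:R * v (sort geq (n :: m))
           else 0.

Definition alpha (eta : F) (k : int) (v : fvec F) : fvec F :=
  match k with
  | Posz 0 => fun m => eta * v m
  | Posz n => ann n v
  | Negz n => crea n.+1 v
  end.

Definition nop (eta : F) (a b : int) (v : fvec F) : fvec F :=
  if (0 < a) then alpha eta b (alpha eta a v) else alpha eta a (alpha eta b v).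

(* L_n = 1/2 sum_k :alpha_k alpha_{n-k}: - lam (n+1) alpha_n, for n >= 0.
   At a coefficient m of grade g only the terms with -g <= k <= n+g can be
   nonzero, so the infinite sum is evaluated over that finite range. *)
Definition Lvir (eta lam : F) (n : nat) (v : fvec F) : fvec F :=
  fun m =>
    let g := grade m in
    2^-1 * (\sum_(i < (2 * g + n).+1)
               nop eta (i%:Z - g%:Z) (n%:Z - (i%:Z - g%:Z)) v m)
    - lam * (n.+1)%:R * alpha eta n%:Z v m.

Definition singular (eta lam : F) (v : fvec F) : Prop :=
  [/\ in_fock v, nonzero v,
      (exists mu : F, forall m, Lvir eta lam 0 v m = mu * v m) &
      (forall n : nat, (0 < n)%N -> forall m, Lvir eta lam n v m = 0)].

Definition proper_sv (v : fvec F) : Prop :=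
  ~ exists c : F, forall m, v m = c * vac m.

Definition homogeneous (v : fvec F) (d : nat) : Prop :=
  forall m, v m != 0 -> grade m = d.

End Fock.

From HB Require Import structures.
From mathcomp Require Import all_boot all_order all_algebra.
From mathcomp Require Import zify ring.
From Stdlib Require Import FunctionalExtensionality Classical.
Import Order.TTheory GRing.Theory Num.Theory.
Set Implicit Arguments. Unset Strict Implicit.

(* For k > 0 the mode alpha_k acts as the derivation k d/dx_k, and the
   Heisenberg relations give [L_n, alpha_k] = - k alpha_(n+k).  If kappa is the
   largest index with alpha_kappa v <> 0, then for n > 0 the vector
   L_n (alpha_kappa v) = alpha_kappa (L_n v) - kappa alpha_(n+kappa) v vanishes,
   and L_0 (alpha_kappa v) = (mu - kappa) alpha_kappa v, so alpha_kappa v is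
   singular; kappa > 0 because a proper v has a monomial with a positive part.
   If v is homogeneous of grade d, then alpha_kappa v is a singular vector of
   grade d - kappa, which is proper as soon as that grade is positive.  The
   minimality hypothesis thus forces kappa = d, and the only monomial of grade d
   containing the part d is alpha_(-d)|eta>. *)

Lemma geq_total : total geq.
Proof. by move=> a b; rewrite /= leq_total. Qed.

Lemma geq_trans : transitive geq.
Proof. by move=> a b c /= ba cb; apply: leq_trans cb ba. Qed.

Lemma geq_anti : antisymmetric geq.
Proof. by move=> a b /andP[/= ba ab]; apply/eqP; rewrite eqn_leq ab ba. Qed.

Lemma sorted_geq_eq (s1 s2 : seq nat) :
  sorted geq s1 -> sorted geq s2 -> perm_eq s1 s2 -> s1 = s2.
Proof. exact: (sorted_eq geq_trans geq_anti). Qed.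

Lemma part_sort_cons k m : (0 < k)%N -> is_part m -> is_part (sort geq (k :: m)).
Proof.
move=> k0 /andP[_ allm]; rewrite /is_part sort_sorted ?geq_total //=.
by rewrite (perm_all _ (permEl (perm_sort _ _))) /= k0.
Qed.

Lemma part_rem n m : is_part m -> is_part (rem n m).
Proof.
move=> /andP[sm allm]; rewrite /is_part (subseq_sorted geq_trans (rem_subseq _ _) sm).
by apply/allP=> x /(mem_subseq (rem_subseq _ _)) xm; apply: (allP allm).
Qed.

Lemma part_sort_id m : is_part m -> sort geq m = m.
Proof. by move=> /andP[sm _]; apply: (sorted_sort geq_trans sm). Qed.

Lemma grade_sort_cons k m : grade (sort geq (k :: m)) = (k + grade m)%N.
Proof. by rewrite /grade (perm_sumn (permEl (perm_sort _ _))). Qed.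

Lemma count_sort_cons j k m :
  count_mem j (sort geq (k :: m)) = ((k == j) + count_mem j m)%N.
Proof. by rewrite (permP (permEl (perm_sort _ _))). Qed.

Lemma count_mem_rem (j n : nat) m :
  n \in m -> count_mem j m = ((n == j) + count_mem j (rem n m))%N.
Proof. by move=> nm; rewrite (permP (perm_to_rem nm)). Qed.

Lemma sort_consC j k m :
  sort geq (k :: sort geq (j :: m)) = sort geq (j :: sort geq (k :: m)).
Proof.
apply: sorted_geq_eq; rewrite ?sort_sorted ?geq_total //.
apply/permP=> p; rewrite !(permP (permEl (perm_sort _ _))) /=.
by rewrite !(permP (permEl (perm_sort _ _))) /= addnCA.
Qed.

Lemma sort_cons_rem k m : is_part m -> k \in m -> sort geq (k :: rem k m) = m.
Proof.
move=> pm km; rewrite -{2}(part_sort_id pm).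
by apply/(perm_sortP geq_total geq_trans geq_anti); rewrite perm_sym perm_to_rem.
Qed.

Lemma rem_sort_cons n k m : is_part m -> n \in k :: m ->
  rem n (sort geq (k :: m)) = sort geq (rem n (k :: m)).
Proof.
move=> /andP[sm _] nkm.
have ns : n \in sort geq (k :: m) by rewrite mem_sort.
apply: sorted_geq_eq.
- apply: (subseq_sorted geq_trans (rem_subseq _ _)); exact: sort_sorted geq_total _.
- by case: (n =P k) nkm => [->|_]; rewrite /= ?eqxx ?sort_sorted ?geq_total.
rewrite -(perm_cons n); apply: (@perm_trans _ (sort geq (k :: m))).
  by rewrite perm_sym perm_to_rem.
rewrite perm_sort; apply: perm_trans (perm_to_rem nkm) _.
by rewrite perm_cons perm_sym perm_sort.
Qed.

Lemma mem_leq_sumn (x : nat) m : x \in m -> (x <= sumn m)%N.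
Proof.
elim: m => //= y m IH; rewrite inE => /orP[/eqP->|/IH xm]; first exact: leq_addr.
exact: leq_trans xm (leq_addl _ _).
Qed.

Lemma grade0_part m : is_part m -> grade m = 0%N -> m = [::].
Proof. by case: m => // x s /andP[_ /andP[x0 _]]; rewrite /grade /=; lia. Qed.

Lemma bounded_ex_max (P : nat -> Prop) N j0 :
  P j0 -> (forall j, P j -> (j <= N)%N) ->
  exists j, P j /\ forall j', (j < j')%N -> ~ P j'.
Proof.
move=> Pj0 bounded.
suff ind d j : (N - j <= d)%N -> P j ->
    exists j, P j /\ forall j', (j < j')%N -> ~ P j'.
  exact: ind N j0 (leq_subr _ _) Pj0.
elim: d j => [|d IH] j hd Pj;
  case: (classic (exists j', (j < j')%N /\ P j')) => [[j' [jj' Pj']]|none].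
- by have := bounded _ Pj'; lia.
- by exists j; split => // j' jj' Pj'; apply: none; exists j'.
- by apply: (IH j') => //; have := bounded _ Pj'; lia.
- by exists j; split => // j' jj' Pj'; apply: none; exists j'.
Qed.

Local Open Scope ring_scope.

Section HeisenbergModes.
Context {F : numClosedFieldType} (eta : F).
Implicit Types (v w : fvec F) (m : seq nat).

Definition part_supported v := forall m, ~~ is_part m -> v m = 0.

Lemma fock_part_supported v : in_fock v -> part_supported v.
Proof. by move=> [supp _] m; apply: contraNeq => /supp ->. Qed.

Lemma ann_part_supported k v : part_supported (ann k v).
Proof. by move=> m pm; rewrite /ann (negbTE pm). Qed.

Lemma alpha_part_supported x v : part_supported v -> part_supported (alpha eta x v).
Proof.
move=> sv m pm; case: x => [[|j]|j] /=; first by rewrite sv // mulr0.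
- by rewrite /ann (negbTE pm).
- by rewrite /crea (negbTE pm).
Qed.

Lemma alpha_pos j v : (0 < j)%N -> alpha eta j%:Z v = ann j v.
Proof. by case: j. Qed.

Lemma alpha_subr x v w c m :
  alpha eta x (fun m => v m - c * w m) m = alpha eta x v m - c * alpha eta x w m.
Proof.
case: x => [[|j]|j] /=; first ring.
- by rewrite /ann; case: ifP => _; ring.
- by rewrite /crea; case: ifP => _; ring.
Qed.

Lemma alpha_below_grade x v m : x < - (grade m)%:Z -> alpha eta x v m = 0.
Proof.
case: x => [j|j] xm; first lia.
rewrite /= /crea; suff -> : (j.+1 \in m) = false by rewrite andbF.
by apply/negP => /mem_leq_sumn; move: xm; rewrite NegzE /grade; lia.
Qed.

Lemma ann_ann j k v m : (0 < j)%N -> (0 < k)%N ->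
  ann j (ann k v) m = ann k (ann j v) m.
Proof.
move=> j0 k0; rewrite /ann; case: ifP => // pm.
rewrite !part_sort_cons // !count_sort_cons sort_consC !mulrA -!natrM.
by congr (_%:R * _); rewrite /= [k == _]eq_sym; case: (j =P k) => [<-|_] /=; nia.
Qed.

Lemma crea_ann j k v m : (0 < k)%N -> part_supported v ->
  crea j (ann k v) m = ann k (crea j v) m - (if j == k then k%:R else 0) * v m.
Proof.
move=> k0 sv; rewrite /crea /ann.
case pm: (is_part m) => /=; last by rewrite sv ?pm // mulr0 subr0.
rewrite part_rem // part_sort_cons // mem_sort inE.
case jm: (j \in m); last first.
  case: (j =P k) => [jk|_] /=; last by rewrite mulr0 mul0r subr0.
  rewrite -jk rem_sort_cons ?mem_head //= eqxx part_sort_id //.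
  by rewrite (count_memPn (negbT jm)) muln1 subrr.
rewrite orbT rem_sort_cons ?inE ?jm ?orbT //=.
have [kj|kj] := eqVneq k j; first subst j.
  rewrite (part_sort_id pm) (sort_cons_rem pm jm) (count_mem_rem k jm) eqxx.
  rewrite -mulrBl -natrB; last by nia.
  by congr (_%:R * _); rewrite add1n; move: (count_mem _ _) => c; nia.
by rewrite (count_mem_rem k jm) eq_sym (negbTE kj) mul0r subr0.
Qed.

Definition comm_coef (x : int) (k : nat) : F := if x == - k%:Z then k%:R else 0.

Lemma comm_coef_pos x k : 0 <= x -> (0 < k)%N -> comm_coef x k = 0.
Proof. by move=> x0 k0; rewrite /comm_coef ifN //; apply/eqP; lia. Qed.

Lemma alpha_ann x k v m : (0 < k)%N -> part_supported v ->
  alpha eta x (ann k v) m = ann k (alpha eta x v) m - comm_coef x k * v m.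
Proof.
move=> k0 sv; case: x => [[|j]|j].
- by rewrite comm_coef_pos // /= /ann; case: ifP => _; ring.
- by rewrite comm_coef_pos // mul0r subr0 /= ann_ann.
- rewrite /= crea_ann // /comm_coef NegzE.
  by have -> : (- j.+1%:Z == - k%:Z) = (j.+1 == k) by apply/eqP/eqP; lia.
Qed.

Lemma nop_ann a b k v m : (0 < k)%N -> part_supported v ->
  nop eta a b (ann k v) m =
  ann k (nop eta a b v) m - comm_coef b k * alpha eta a v m
                          - comm_coef a k * alpha eta b v m.
Proof.
move=> k0 sv; have sva := alpha_part_supported a sv.
have svb := alpha_part_supported b sv; rewrite /nop; case: ifP => a0.
- have ca := comm_coef_pos (ltW a0) k0.
  have ann_alpha_a : alpha eta a (ann k v) = ann k (alpha eta a v).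
    by apply: functional_extensionality => m'; rewrite alpha_ann // ca mul0r subr0.
  by rewrite ann_alpha_a alpha_ann // ca mul0r subr0.
- have ann_alpha_b :
      alpha eta b (ann k v) = fun m => ann k (alpha eta b v) m - comm_coef b k * v m.
    by apply: functional_extensionality => m'; rewrite alpha_ann.
  by rewrite ann_alpha_b alpha_subr alpha_ann //; ring.
Qed.

Lemma nop_outside n x v m :
  x < - (grade m)%:Z \/ n%:Z + (grade m)%:Z < x -> nop eta x (n%:Z - x) v m = 0.
Proof.
rewrite /nop; case=> xm.
- by rewrite ifN; [apply: alpha_below_grade | apply/negP; lia].
- by rewrite ifT; [apply: alpha_below_grade; lia | lia].
Qed.

Lemma sum_comm_coef_snd n k v m G : (k <= G)%N ->
  \sum_(i < (2 * G + n).+1)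
     comm_coef (n%:Z - (i%:Z - G%:Z)) k * alpha eta (i%:Z - G%:Z) v m
  = k%:R * alpha eta (n + k)%:Z v m.
Proof.
move=> kG; have i0_lt : (n + k + G < (2 * G + n).+1)%N by lia.
rewrite (bigD1 (Ordinal i0_lt)) //= big1 ?addr0.
  have -> : (n + k + G)%:Z - G%:Z = (n + k)%:Z by lia.
  by rewrite /comm_coef ifT //; apply/eqP; lia.
move=> i /eqP i_neq; rewrite /comm_coef ifN ?mul0r //.
by apply/eqP => ?; apply: i_neq; apply: val_inj => /=; lia.
Qed.

Lemma sum_comm_coef_fst n k v m G : (k <= G)%N ->
  \sum_(i < (2 * G + n).+1)
     comm_coef (i%:Z - G%:Z) k * alpha eta (n%:Z - (i%:Z - G%:Z)) v m
  = k%:R * alpha eta (n + k)%:Z v m.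
Proof.
move=> kG; have i0_lt : (G - k < (2 * G + n).+1)%N by lia.
rewrite (bigD1 (Ordinal i0_lt)) //= big1 ?addr0.
  have -> : n%:Z - ((G - k)%N%:Z - G%:Z) = (n + k)%:Z by lia.
  by rewrite /comm_coef ifT //; apply/eqP; lia.
move=> i /eqP i_neq; rewrite /comm_coef ifN ?mul0r //.
by apply/eqP => ?; apply: i_neq; apply: val_inj => /=; lia.
Qed.

Variable lam : F.

(* Lvir at m and at a longer partition are truncated to different windows. *)
Lemma Lvir_window n v m G : (grade m <= G)%N ->
  Lvir eta lam n v m =
  2^-1 * (\sum_(i < (2 * G + n).+1)
            nop eta (i%:Z - G%:Z) (n%:Z - (i%:Z - G%:Z)) v m)
  - lam * (n.+1)%:R * alpha eta n%:Z v m.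
Proof.
move=> gG; rewrite /Lvir; congr (_ * _ - _).
set g := grade m; rewrite -(subnKC gG); move: (G - g)%N => e.
pose T (c i : nat) := nop eta (i%:Z - c%:Z) (n%:Z - (i%:Z - c%:Z)) v m.
rewrite -(big_mkord xpredT (T g)) -(big_mkord xpredT (T (g + e)%N)).
rewrite [RHS](big_cat_nat _ (n := e)) //=; last by lia.
rewrite [X in _ = _ + X](big_cat_nat _ (n := e + (2 * g + n).+1)) //=; [|lia|lia].
have below : \sum_(0 <= i < e) T (g + e)%N i = 0.
  rewrite big_nat_cond big1 // => i /andP[/andP[_ ie] _].
  by apply: nop_outside; left; lia.
have above : \sum_(e + (2 * g + n).+1 <= i < (2 * (g + e) + n).+1) T (g + e)%N i = 0.
  rewrite big_nat_cond big1 // => i /andP[/andP[ei _] _].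
  by apply: nop_outside; right; lia.
rewrite below above add0r addr0 -{1}(add0n e) big_addn addKn.
by apply: eq_bigr => i _; rewrite /T; congr nop; lia.
Qed.

Lemma Lvir_ann n k v m : (0 < k)%N -> part_supported v -> is_part m ->
  Lvir eta lam n (ann k v) m =
  ann k (Lvir eta lam n v) m - k%:R * alpha eta (n + k)%:Z v m.
Proof.
move=> k0 sv pm; set G := grade (sort geq (k :: m)).
have gG : G = (k + grade m)%N by rewrite /G grade_sort_cons.
have kG : (k <= G)%N by rewrite gG leq_addr.
rewrite (@Lvir_window n (ann k v) m G); last by rewrite gG leq_addl.
rewrite {3}/ann pm (@Lvir_window n v (sort geq (k :: m)) G) //.
under eq_bigr => i _ do rewrite nop_ann //.
rewrite !sumrB sum_comm_coef_snd // sum_comm_coef_fst // alpha_ann //.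
rewrite comm_coef_pos // mul0r subr0 {2}/ann pm.
under eq_bigr => i _ do rewrite /ann pm.
by rewrite -mulr_sumr; field.
Qed.

End HeisenbergModes.

Section TopMode.
Context {F : numClosedFieldType} (eta lam : F).
Implicit Types (v w : fvec F) (m : seq nat).

Lemma Lvir_nonpart n w m : part_supported w -> ~~ is_part m -> Lvir eta lam n w m = 0.
Proof.
move=> sw pm; rewrite /Lvir big1 ?mulr0 ?sub0r.
  by rewrite alpha_part_supported // mulr0 oppr0.
by move=> i _; rewrite /nop; case: ifP => _;
  exact: (alpha_part_supported _ _ (alpha_part_supported _ _ sw) pm).
Qed.

Lemma ann_neq0P k v m : ann k v m != 0 -> is_part m /\ v (sort geq (k :: m)) != 0.
Proof.
by rewrite /ann; case: ifP => [pm|_]; rewrite ?eqxx // mulf_eq0 negb_or => /andP[].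
Qed.

Lemma in_fock_ann k v : in_fock v -> in_fock (ann k v).
Proof.
move=> [_ [N vN]]; split; first by move=> m /ann_neq0P[].
exists N => m gm; rewrite /ann; case: ifP => // _.
by rewrite vN ?mulr0 // grade_sort_cons; lia.
Qed.

Lemma singular_ann k v : singular eta lam v -> (0 < k)%N -> nonzero (ann k v) ->
  (forall j, (k < j)%N -> forall m, ann j v m = 0) -> singular eta lam (ann k v).
Proof.
move=> [fv _ [mu Lv0] Lv] k0 nz above.
have sv := fock_part_supported fv; have sa := ann_part_supported k v.
split; [exact: in_fock_ann | by [] | exists (mu - k%:R) => m | move=> n n0 m].
- have [pm|pm] := boolP (is_part m); last first.
    by rewrite Lvir_nonpart // sa // mulr0.
  by rewrite Lvir_ann // add0n alpha_pos // /ann pm Lv0; ring.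
- have [pm|pm] := boolP (is_part m); last by rewrite Lvir_nonpart.
  rewrite Lvir_ann // alpha_pos ?addn_gt0 ?n0 // above; last by lia.
  by rewrite /ann pm Lv // !mulr0 subrr.
Qed.

Lemma proper_ann_nonzero v : in_fock v -> proper_sv v ->
  exists2 k, (0 < k)%N & nonzero (ann k v).
Proof.
move=> [supp _] pv.
have [m0 [m0_nil vm0]] : exists m, m != [::] /\ v m != 0.
  apply: NNPP => none; apply: pv; exists (v [::]) => m; rewrite /vac.
  case: eqP => [->|/eqP m_nil]; first by rewrite mulr1.
  by rewrite mulr0; apply: contraNeq (m_nil) => vm; exfalso; apply: none; exists m.
case: m0 m0_nil vm0 (supp _ vm0) => [//|j m1] _ vm0 pm0.
have j0 : (0 < j)%N by case/andP: pm0 => _ /andP[].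
have pm1 : is_part m1 by have := part_rem j pm0; rewrite /= eqxx.
exists j => //; exists m1; rewrite /ann pm1 (part_sort_id pm0).
by rewrite mulf_neq0 // pnatr_eq0 muln_eq0 negb_or -!lt0n j0.
Qed.

Lemma ann_nonzero_bounded v : in_fock v ->
  exists N, forall k, nonzero (ann k v) -> (k <= N)%N.
Proof.
move=> [_ [N vN]]; exists N => k [m /ann_neq0P[_]]; apply: contraNleq => Nk.
by rewrite vN // grade_sort_cons; lia.
Qed.

Lemma exists_top_mode v : singular eta lam v -> proper_sv v ->
  exists k, [/\ (0 < k)%N, nonzero (ann k v),
     (forall j, (k < j)%N -> forall m, ann j v m = 0) & singular eta lam (ann k v)].
Proof.
move=> sv pv; have [fv _ _ _] := sv.
have [j j0 nzj] := proper_ann_nonzero fv pv.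
have [N bounded] := ann_nonzero_bounded fv.
have [k [[k0 nzk] top]] := @bounded_ex_max (fun k => 0 < k /\ nonzero (ann k v))%N
  N j (conj j0 nzj) (fun k Pk => bounded k Pk.2).
have above j' : (k < j')%N -> forall m, ann j' v m = 0.
  move=> kj m; apply: NNPP => /eqP nz; apply: (top j' kj); split; [lia | by exists m].
by exists k; split => //; apply: singular_ann.
Qed.

End TopMode.

Lemma homogeneous_ann (F : numClosedFieldType) k (v : fvec F) d :
  homogeneous v d -> homogeneous (ann k v) (d - k).
Proof.
by move=> hv m /ann_neq0P[_ /hv]; rewrite grade_sort_cons => <-; rewrite addKn.
Qed.

Lemma proper_of_grade_pos (F : numClosedFieldType) (w : fvec F) e :
  homogeneous w e -> (0 < e)%N -> nonzero w -> proper_sv w.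
Proof.
move=> hw e0 [m wm] [c wc]; move: wm (hw _ wm); rewrite wc /vac.
case: (m =P [::]) => [->|_]; rewrite ?mulr0 ?eqxx // => _ e_eq.
by move: e0; rewrite -e_eq.
Qed.

Unset Implicit Arguments.

Theorem mainTheorem5 (F : numClosedFieldType) (eta lam : F) (v : fvec F) :
  singular eta lam v -> proper_sv v ->
  (exists k : int,
      [/\ 0 < k,
          nonzero (alpha eta k v),
          (forall j : int, k < j -> forall m, alpha eta j v m = 0) &
          singular eta lam (alpha eta k v)])
  /\
  (forall d : nat, homogeneous v d ->
     (forall (w : fvec F) (e : nat), (0 < e < d)%N -> homogeneous w e ->
        singular eta lam w -> ~ proper_sv w) ->
     v [:: d] != 0).
Proof.
move=> sv pv; have [k [k0 nzk top sk]] := exists_top_mode sv pv.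
split.
  exists k%:Z; rewrite alpha_pos //; split => // -[j|j] kj m.
    by rewrite alpha_pos ?top //; lia.
  by move: kj; rewrite NegzE; lia.
move=> d hv minimal.
have [m0 /ann_neq0P[pm0 vm0]] := nzk.
have d_eq := hv _ vm0; rewrite grade_sort_cons in d_eq.
have hk : homogeneous (ann k v) (d - k) := homogeneous_ann hv.
have kd : k = d.
  apply/eqP; rewrite eqn_leq -{1}d_eq leq_addr /= leqNgt; apply/negP => kd.
  apply: (minimal _ (d - k)%N _ hk sk); first lia.
  by apply: proper_of_grade_pos hk _ nzk; lia.
have m0_nil : m0 = [::] by apply: grade0_part; lia.
by move: vm0; rewrite m0_nil kd.
Qed.
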